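(* Let $J\subset\mathbb N_+$ be finite and let $\mathcal M(M_J,P)_l$ denote the part of the Margolis homology $\mathcal M(M_J,P)=\ker P/\operatorname{im}P$ of reduced length $l$. If $|J|=2t$, then $\dim_{\mathbb F_2}\mathcal M(M_J,P)_l=2^t$ for $l=t$ and $0$ otherwise. If $|J|=2t+1$, then $\dim_{\mathbb F_2}\mathcal M(M_J,P)_l=2^t$ for $l\in\{t,t+1\}$ and $0$ otherwise.
   Context: Over $\mathbb F_2$, $\Lambda(Q_1,P)$ is the exterior algebra on $Q_1,P$, a Hopf algebra with $Q_1$ primitive and $\Delta(P)=P\otimes1+Q_1\otimes Q_1+1\otimes P$. For $i\in\mathbb N_+$, $M_i$ has basis $t_i,x_i$ with $Q_1(x_i)=t_i$, $Q_1(t_i)=0$, $P=0$; for finite $J\subset\mathbb N_+$, $M_J=\bigotimes_{j\in J}M_j$ with action through the coproduct. $M_J$ has basis $t_Ix_{J\setminus I}$ ($I\subseteq J$; the tensor with factor $t_j$ for $j\in I$, $x_j$ otherwise), whose reduced length is $|J\setminus I|$. $Q_1$ lowers reduced length by $1$ and $P$ by $2$, so $\mathcal M(M_J,P)$ splits as a direct sum of its reduced-length-homogeneous parts $\mathcal M(M_J,P)_l$. *)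

From HB Require Import structures.
From mathcomp Require Import all_boot all_order all_algebra.
Set Implicit Arguments. Unset Strict Implicit. Unset Printing Implicit Defensive.
Import GRing.Theory.
Local Open Scope ring_scope.

(* Basis of M_j : the boolean [true] stands for x_j, [false] for t_j.
   Structure maps are given by coefficients: [Mq j b c] is the coefficient
   of basis element c in Q_1(b); [Mp j b c] the coefficient of c in P(b). *)
Definition Mq (j : nat) (b c : bool) : 'F_2 := ((b == true) && (c == false))%:R.
Definition Mp (j : nat) (b c : bool) : 'F_2 := 0.

(* M_J = M_{j1} (x) (M_{j2} (x) ( ... (x) F_2)) for J = [:: j1; j2; ...],
   basis = boolean sequences of length size J (tensor basis vectors).
   Action through the coproduct:
     Q1(a (x) m) = Q1 a (x) m + a (x) Q1 m          (Q1 primitive)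
     P (a (x) m) = P a (x) m + Q1 a (x) Q1 m + a (x) P m
   (char 2: no signs); on the trivial module F_2 (empty J) Q1, P act by 0. *)
Fixpoint tq (J : seq nat) (s s' : seq bool) : 'F_2 :=
  match J, s, s' with
  | j :: J', b :: r, c :: r' => Mq j b c * (r == r')%:R + (b == c)%:R * tq J' r r'
  | _, _, _ => 0
  end.

Fixpoint tp (J : seq nat) (s s' : seq bool) : 'F_2 :=
  match J, s, s' with
  | j :: J', b :: r, c :: r' =>
      Mp j b c * (r == r')%:R + Mq j b c * tq J' r r' + (b == c)%:R * tp J' r r'
  | _, _, _ => 0
  end.

Definition MJbasis (J : seq nat) := ((size J).-tuple bool)%type.

(* matrix of P acting on row vectors: row i is P(basis element i) *)
Definition Pmx (J : seq nat) : 'M['F_2]_#|{: MJbasis J}| :=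
  \matrix_(i, k) tp J (tval (enum_val i : MJbasis J)) (tval (enum_val k : MJbasis J)).

Definition redlen (J : seq nat) (b : MJbasis J) : nat := count id b.

Definition lenpart (J : seq nat) (l : nat) : 'M['F_2]_#|{: MJbasis J}| :=
  \matrix_(i, k) ((i == k) && (redlen (enum_val i : MJbasis J) == l))%:R.

Definition margolisDim (J : seq nat) (l : nat) : nat :=
  (\rank (kermx (Pmx J) :&: lenpart J l)%MS - \rank (Pmx J :&: lenpart J l)%MS)%N.

From mathcomp Require Import all_boot all_order all_algebra.
From mathcomp Require Import ring zify.
Set Implicit Arguments. Unset Strict Implicit. Unset Printing Implicit Defensive.
Import GRing.Theory.
Local Open Scope ring_scope.

(* Let c_z be the dimension of the reduced-length-z part of M_J and r_z the
   rank of P on it; as P lowers reduced length by 2, the Margolis homology in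
   length l has dimension c_l - r_l - r_(l+2).  Splitting off one tensor factor
   M_j turns P into [[P, Q_1], [0, P]] and Q_1 into [[Q_1, 1], [0, Q_1]].
   Splitting off two factors, a change of basis built from Q_1 decomposes
   M_j1 (x) M_j2 (x) M into a cone on M, where P is acyclic, and two copies of M
   raised by one in reduced length.  Hence c_z = h_z + r_z + r_(z+2), with h the
   claimed dimensions, propagates from J to {j1, j2} u J, and the cases
   |J| = 0, 1 are immediate. *)

Section Intertwining.
Variables (F : fieldType) (m n : nat) (U : 'M[F]_(m, n)) (W : 'M[F]_(n, m)).

Lemma intertwine_mul (A1 A2 : 'M[F]_m) (B1 B2 : 'M[F]_n) :
  A1 *m U = U *m B1 -> A2 *m U = U *m B2 -> A1 *m A2 *m U = U *m (B1 *m B2).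
Proof. by move=> AB1 AB2; rewrite -mulmxA AB2 !mulmxA AB1. Qed.

Hypotheses (UW : U *m W = 1%:M) (WU : W *m U = 1%:M).

Lemma intertwine_eq (A : 'M[F]_m) (B : 'M[F]_n) : A *m U = U *m B -> A = U *m B *m W.
Proof. by move=> AB; rewrite -AB -mulmxA UW mulmx1. Qed.

Lemma intertwine_rank (A : 'M[F]_m) (B : 'M[F]_n) : A *m U = U *m B -> \rank A = \rank B.
Proof.
move=> AB; have BE : B = W *m A *m U by rewrite -mulmxA AB mulmxA WU mul1mx.
apply/eqP; rewrite eqn_leq; apply/andP; split.
  by rewrite (intertwine_eq AB) (leq_trans (mxrankM_maxl _ _)) ?mxrankM_maxr.
by rewrite BE (leq_trans (mxrankM_maxl _ _)) ?mxrankM_maxr.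
Qed.

End Intertwining.

Section KernelImageCap.
Variables (F : fieldType) (n : nat) (A L : 'M[F]_n).

Lemma mxrank_ker_cap : \rank (kermx A :&: L)%MS = (\rank L - \rank (L *m A))%N.
Proof. by rewrite -(mxrank_mul_ker L A) addKn capmxC. Qed.

Lemma mxrank_img_cap (L' : 'M[F]_n) :
  L *m L = L -> A *m L = L' *m A -> \rank (A :&: L)%MS = \rank (L' *m A).
Proof.
move=> LL AL; apply/eqP; rewrite eqn_leq; apply/andP; split; apply: mxrankS.
  have /submxP[Y defY] : (A :&: L <= A)%MS by apply: capmxSl.
  have /submxP[Z defZ] : (A :&: L <= L)%MS by apply: capmxSr.
  have -> : (A :&: L)%MS = (A :&: L)%MS *m L by rewrite {2}defZ -mulmxA LL -defZ.
  by rewrite {1}defY -mulmxA AL submxMl.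
by rewrite sub_capmx submxMl -AL submxMl.
Qed.

End KernelImageCap.

Section Reindex.
Variables (R : nzRingType) (T : finType) (m : nat) (f : T -> 'I_m) (g : 'I_m -> T).
Hypotheses (fK : cancel f g) (gK : cancel g f).

Definition reindex_mx : 'M[R]_(#|{: T}|, m) := \matrix_(i, k) (f (enum_val i) == k)%:R.

Lemma reindex_mxK : reindex_mx *m reindex_mx^T = 1%:M.
Proof.
apply/matrixP => i i'; rewrite !mxE (bigD1 (f (enum_val i))) //= big1 ?addr0.
  rewrite !mxE eqxx mul1r (can_eq fK) (inj_eq (@enum_val_inj _ _)) eq_sym.
  by case: (i' == i).
by move=> k /negbTE kn; rewrite !mxE eq_sym kn mul0r.
Qed.

Lemma reindex_mxKV : reindex_mx^T *m reindex_mx = 1%:M.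
Proof.
apply/matrixP => k k'; rewrite !mxE (bigD1 (enum_rank (g k))) //= big1 ?addr0.
  by rewrite !mxE enum_rankK gK eqxx mul1r; case: (k == k').
move=> i /negbTE ni; rewrite !mxE; case: eqP => [e|]; last by rewrite mul0r.
by rewrite -e fK enum_valK eqxx in ni.
Qed.

Lemma reindex_mx_intertwine (A : T -> T -> R) (B : 'M[R]_m) :
    (forall x y, A x y = B (f x) (f y)) ->
  (\matrix_(i, k) A (enum_val i) (enum_val k)) *m reindex_mx = reindex_mx *m B.
Proof.
move=> AB; apply/matrixP => i k; rewrite !mxE.
rewrite (bigD1 (enum_rank (g k))) //= big1 ?addr0.
  rewrite (bigD1 (f (enum_val i))) //= big1 ?addr0.
    by rewrite !mxE enum_rankK gK !eqxx mulr1 mul1r AB gK.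
  by move=> k' /negbTE kn; rewrite !mxE eq_sym kn mul0r.
move=> i' /negbTE ni; rewrite !mxE; case: eqP => [e|]; last by rewrite mulr0.
by rewrite -e fK enum_valK eqxx in ni.
Qed.

End Reindex.

Section HeadSplit.
Variable n : nat.
Local Notation N := #|{: n.-tuple bool}|.

Definition head_split (t : n.+1.-tuple bool) : 'I_(N + N) :=
  if thead t then lshift N (enum_rank [tuple of behead t])
  else rshift N (enum_rank [tuple of behead t]).

Definition head_unsplit (k : 'I_(N + N)) : n.+1.-tuple bool :=
  match split k with
  | inl a => [tuple of true :: (enum_val a : n.-tuple bool)]
  | inr a => [tuple of false :: (enum_val a : n.-tuple bool)]
  end.

Lemma head_split_cons b (r : n.-tuple bool) :
  head_split [tuple of b :: r] =
    if b then lshift N (enum_rank r) else rshift N (enum_rank r).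
Proof.
rewrite /head_split theadE.
by have -> : [tuple of behead [tuple of b :: r]] = r by apply: val_inj.
Qed.

Lemma head_splitK : cancel head_split head_unsplit.
Proof.
case/tupleP=> b r; rewrite head_split_cons /head_unsplit.
by case: b; rewrite ?(unsplitK (inl _ _)) ?(unsplitK (inr _ _)) enum_rankK; apply: val_inj.
Qed.

Lemma head_unsplitK : cancel head_unsplit head_split.
Proof.
move=> k; rewrite /head_unsplit.
by case: split_ordP => a -> /=; rewrite head_split_cons enum_valK.
Qed.

End HeadSplit.

(* The action of P, Q_1 and of the reduced-length projectors on M_j (x) M,
   in the blocks x_j (x) M, t_j (x) M. *)
Section TensorBlocks.
Variables (R : nzRingType) (N : nat).

Definition tensorP (P Q : 'M[R]_N) := block_mx P Q 0 P.
Definition tensorQ (Q : 'M[R]_N) := block_mx Q 1%:M 0 Q.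
Definition tensorL (L : int -> 'M[R]_N) (z : int) := block_mx (L (z - 1)) 0 0 (L z).

End TensorBlocks.

Section TensorIntertwine.
Variables (R : nzRingType) (N m : nat) (U : 'M[R]_(N, m)) (W : 'M[R]_(m, N)).
Local Notation U2 := (block_mx U 0 0 U).

Lemma block_diag_mulmx1 : U *m W = 1%:M -> U2 *m block_mx W 0 0 W = 1%:M.
Proof.
by move=> UW; rewrite mulmx_block !(mul0mx, mulmx0, addr0, add0r) UW -scalar_mx_block.
Qed.

Variables (P Q : 'M[R]_N) (P0 Q0 : 'M[R]_m).
Hypotheses (PU : P *m U = U *m P0) (QU : Q *m U = U *m Q0).

Lemma tensorP_intertwine : tensorP P Q *m U2 = U2 *m tensorP P0 Q0.
Proof. by rewrite !mulmx_block !(mul0mx, mulmx0, addr0, add0r) PU QU. Qed.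

Lemma tensorL_intertwine (L : int -> 'M[R]_N) (L0 : int -> 'M[R]_m) z :
  (forall k, L k *m U = U *m L0 k) -> tensorL L z *m U2 = U2 *m tensorL L0 z.
Proof. by move=> LU; rewrite !mulmx_block !(mul0mx, mulmx0, addr0, add0r) !LU. Qed.

End TensorIntertwine.

Lemma addmx_pchar2 (F : fieldType) m n (A : 'M[F]_(m, n)) :
  2 \in [pchar F] -> A + A = 0.
Proof. by move=> F2; apply/matrixP => i j; rewrite !mxE addrr_pchar2. Qed.

Section TwoFoldTensor.
Variables (F : fieldType) (N : nat) (P Q : 'M[F]_N) (L : int -> 'M[F]_N).
Hypotheses (F2 : 2 \in [pchar F]) (PP : P *m P = 0) (QQ : Q *m Q = 0)
  (PQ : P *m Q = Q *m P).
Hypotheses (PL : forall k, P *m L k = L (k + 2) *m P)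
  (QL : forall k, Q *m L k = L (k + 1) *m Q) (LL : forall k, L k *m L k = L k).

Let addmxx k l (A : 'M[F]_(k, l)) : A + A = 0 := addmx_pchar2 A F2.

Lemma rank_cone (A B : 'M[F]_N) :
  A *m A = A -> B *m P = P *m A ->
  \rank (block_mx A 0 0 B *m block_mx P 1%:M 0 P) = \rank A.
Proof.
move=> AA BP; rewrite mulmx_block !(mul0mx, mulmx0, mul1mx, mulmx1, addr0, add0r).
have sub : (row_mx 0 (B *m P) <= row_mx (A *m P) A)%MS.
  apply/submxP; exists (B *m P); rewrite mul_mx_row BP; congr row_mx.
    by rewrite mulmxA -(mulmxA P) AA -BP -mulmxA PP mulmx0.
  by rewrite -mulmxA AA.
rewrite block_mxEv -addsmxE (addsmx_idPl sub).
apply/eqP; rewrite eqn_leq; apply/andP; split.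
  by rewrite -[A in row_mx _ A]mulmx1 -mul_mx_row mxrankM_maxl.
apply: (leq_trans _ (mxrankM_maxl _ (col_mx (0 : 'M_(N, N)) 1%:M))).
by rewrite mul_row_col mulmx0 mulmx1 add0r.
Qed.

(* The blocks of tensorP (tensorP P Q) (tensorQ Q) are x x, x t, t x, t t
   (tensored with M).  In the basis given by the rows of chbasis' the first two
   new blocks, x x and t t corrected by Q, form a cone on which P is acyclic,
   and the last two, x t and t x corrected by Q, are copies of M. *)
Let chbasis := block_mx (block_mx 1%:M 0 Q 0) (block_mx 0 0 1%:M 0)
                  (block_mx Q 0 0 1%:M) (block_mx 0 1%:M Q Q) : 'M_((N + N) + (N + N)).
Let chbasis' := block_mx (block_mx 1%:M 0 0 Q) (block_mx 0 0 Q 1%:M)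
                   (block_mx Q 1%:M Q 0) (block_mx 0 0 1%:M 0) : 'M_((N + N) + (N + N)).

Let chbasisK : chbasis *m chbasis' = 1%:M.
Proof.
rewrite /chbasis /chbasis' !mulmx_block !(mul0mx, mulmx0, mul1mx, mulmx1, addr0, add0r).
by rewrite !add_block_mx !(QQ, addmxx, addr0, add0r, block_mx0) -!scalar_mx_block.
Qed.

Let chbasisKV : chbasis' *m chbasis = 1%:M.
Proof.
rewrite /chbasis /chbasis' !mulmx_block !(mul0mx, mulmx0, mul1mx, mulmx1, addr0, add0r).
by rewrite !add_block_mx !(QQ, addmxx, addr0, add0r, block_mx0) -!scalar_mx_block.
Qed.

Let tensor2P_split : tensorP (tensorP P Q) (tensorQ Q) *m chbasis =
  chbasis *m block_mx (block_mx P 1%:M 0 P) 0 0 (block_mx P 0 0 P).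
Proof.
rewrite /tensorP /tensorQ /chbasis !mulmx_block.
rewrite !(mul0mx, mulmx0, mul1mx, mulmx1, addr0, add0r).
by rewrite !add_block_mx !(QQ, addmxx, addr0, add0r, block_mx0) PQ.
Qed.

Let tensor2L_split z : tensorL (tensorL L) z *m chbasis =
  chbasis *m block_mx (block_mx (L (z - 2)) 0 0 (L z)) 0 0
                      (block_mx (L (z - 1)) 0 0 (L (z - 1))).
Proof.
have -> : z - 2 = z - 1 - 1 by ring.
rewrite /tensorL /chbasis !mulmx_block !(mul0mx, mulmx0, mul1mx, mulmx1, addr0, add0r).
by rewrite !QL !subrK.
Qed.

Lemma rank_tensor2_LP z :
  \rank (tensorL (tensorL L) z *m tensorP (tensorP P Q) (tensorQ Q)) =
  (\rank (L (z - 2)) + 2 * \rank (L (z - 1) *m P))%N.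
Proof.
rewrite (intertwine_rank chbasisK chbasisKV
  (intertwine_mul (tensor2L_split z) tensor2P_split)).
rewrite mulmx_block !(mul0mx, mulmx0, addr0, add0r) rank_diag_block_mx rank_cone.
- by rewrite mulmx_block !(mul0mx, mulmx0, addr0, add0r) rank_diag_block_mx mul2n addnn.
- exact: LL.
- by rewrite PL (_ : z - 2 + 2 = z) //; ring.
Qed.

End TwoFoldTensor.

Definition Qmx (J : seq nat) : 'M['F_2]_#|{: MJbasis J}| :=
  \matrix_(i, k) tq J (tval (enum_val i : MJbasis J)) (tval (enum_val k : MJbasis J)).

(* Indexed by int so that the shifts z - 1, z - 2 are not truncated. *)
Definition lenmx (J : seq nat) (z : int) : 'M['F_2]_#|{: MJbasis J}| :=
  diag_mx (\row_i ((redlen (enum_val i : MJbasis J))%:Z == z)%:R).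

Lemma lenmxE J z : lenmx J z = \matrix_(i, k)
  ((enum_val i == enum_val k :> MJbasis J) && ((redlen (enum_val i : MJbasis J))%:Z == z))%:R.
Proof.
apply/matrixP => i k; rewrite !mxE (inj_eq enum_val_inj).
by case: (i == k); case: (_ == z).
Qed.

Lemma lenpartE J (l : nat) : lenpart J l = lenmx J l.
Proof. by apply/matrixP => i k; rewrite !mxE eqz_nat; case: (i == k); case: (_ == l). Qed.

Lemma lenmx_idem J z : lenmx J z *m lenmx J z = lenmx J z.
Proof.
by rewrite mulmx_diag; congr diag_mx; apply/rowP => i; rewrite !mxE -natrM mulnb andbb.
Qed.

Lemma tq_redlen J s s' : tq J s s' != 0 -> count id s = (count id s').+1.
Proof.
elim: J s s' => [|j J IH] [|b r] [|c r'] //=; try by rewrite eqxx.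
case: b; case: c; rewrite /Mq /= ?mul0r ?mul1r ?add0r ?addr0 ?eqxx //.
- by move/IH => ->.
- by case: (r =P r') => [->|_] //; rewrite eqxx.
- by move/IH => ->.
Qed.

Lemma tp_redlen J s s' : tp J s s' != 0 -> count id s = (count id s').+2.
Proof.
elim: J s s' => [|j J IH] [|b r] [|c r'] //=; try by rewrite eqxx.
case: b; case: c; rewrite /Mp /Mq /= ?mul0r ?mul1r ?add0r ?addr0 ?eqxx //.
- by move/IH => ->.
- by move/tq_redlen => ->.
- by move/IH => ->.
Qed.

Lemma Pmx_lenmx J k : Pmx J *m lenmx J k = lenmx J (k + 2) *m Pmx J.
Proof.
apply/matrixP => i i'; rewrite mul_mx_diag mul_diag_mx !mxE.
set v := tp _ _ _; have [->|/tp_redlen] := eqVneq v 0; first by rewrite mul0r mulr0.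
by rewrite /redlen => ->; rewrite mulrC -[(count id _).+2]addn2 PoszD (inj_eq (addIr _)).
Qed.

Lemma Qmx_lenmx J k : Qmx J *m lenmx J k = lenmx J (k + 1) *m Qmx J.
Proof.
apply/matrixP => i i'; rewrite mul_mx_diag mul_diag_mx !mxE.
set v := tq _ _ _; have [->|/tq_redlen] := eqVneq v 0; first by rewrite mul0r mulr0.
by rewrite /redlen => ->; rewrite mulrC -[(count id _).+1]addn1 PoszD (inj_eq (addIr _)).
Qed.

Definition consU (J : seq nat) := reindex_mx 'F_2 (@head_split (size J)).

Lemma consUK J : consU J *m (consU J)^T = 1%:M.
Proof. exact: reindex_mxK (@head_splitK _). Qed.

Lemma consUKV J : (consU J)^T *m consU J = 1%:M.
Proof. exact: reindex_mxKV (@head_splitK _) (@head_unsplitK _). Qed.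

Local Notation cons_intertwine J A :=
  (@reindex_mx_intertwine _ _ _ _ _ (@head_splitK (size J)) (@head_unsplitK (size J)) A).

Lemma Pmx_cons j J : Pmx (j :: J) *m consU J = consU J *m tensorP (Pmx J) (Qmx J).
Proof.
apply: (cons_intertwine J (fun x y => tp (j :: J) (tval x) (tval y))) => x y.
case/tupleP: x => b r; case/tupleP: y => c r'; rewrite !head_split_cons.
by case: b; case: c;
  rewrite ?block_mxEul ?block_mxEur ?block_mxEdl ?block_mxEdr !mxE ?enum_rankK /Mp /Mq /=
    ?mul0r ?mul1r ?add0r ?addr0.
Qed.

Lemma Qmx_cons j J : Qmx (j :: J) *m consU J = consU J *m tensorQ (Qmx J).
Proof.
apply: (cons_intertwine J (fun x y => tq (j :: J) (tval x) (tval y))) => x y.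
case/tupleP: x => b r; case/tupleP: y => c r'; rewrite !head_split_cons.
case: b; case: c;
  rewrite ?block_mxEul ?block_mxEur ?block_mxEdl ?block_mxEdr !mxE ?enum_rankK /Mq /=
    ?mul0r ?mul1r ?add0r ?addr0 ?mulr1 //.
by rewrite (inj_eq enum_rank_inj).
Qed.

Lemma lenmx_cons j J z : lenmx (j :: J) z *m consU J = consU J *m tensorL (lenmx J) z.
Proof.
rewrite lenmxE.
apply: (cons_intertwine J (fun x y => ((x == y) && ((count id x)%:Z == z))%:R)) => x y.
case/tupleP: x => b r; case/tupleP: y => c r'; rewrite !head_split_cons.
have eq_cons b' (s s' : (size J).-tuple bool) :
    ([tuple of b' :: s] == [tuple of b' :: s']) = (s == s').
  by apply/eqP/eqP => [/(f_equal val) [] /val_inj|->].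
case: b; case: c;
  rewrite ?block_mxEul ?block_mxEur ?block_mxEdl ?block_mxEdr !mxE ?enum_rankK //=
    eq_cons (inj_eq enum_rank_inj).
  by case: (r == r'); rewrite //= /redlen PoszD [_ == z - 1]eq_sym subr_eq addrC eq_sym.
by case: (r == r').
Qed.

Lemma Pmx_nil : Pmx [::] = 0.
Proof. by apply/matrixP => i k; rewrite !mxE. Qed.

Lemma Qmx_nil : Qmx [::] = 0.
Proof. by apply/matrixP => i k; rewrite !mxE. Qed.

Lemma pchar_F2 : 2 \in [pchar 'F_2].
Proof. exact: pchar_Fp. Qed.

Lemma Pmx_Qmx_relations J :
  [/\ Pmx J *m Pmx J = 0, Qmx J *m Qmx J = 0 & Pmx J *m Qmx J = Qmx J *m Pmx J].
Proof.
elim: J => [|j J [PP QQ PQ]]; first by rewrite Pmx_nil Qmx_nil !mulmx0.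
have addmxx (A : 'M['F_2]_#|{: MJbasis J}|) := addmx_pchar2 A pchar_F2.
have consE := intertwine_eq (consUK J).
have [hP hQ] := (Pmx_cons j J, Qmx_cons j J).
rewrite (consE _ _ (intertwine_mul hP hP)) (consE _ _ (intertwine_mul hQ hQ)).
rewrite (consE _ _ (intertwine_mul hP hQ)) (consE _ _ (intertwine_mul hQ hP)).
rewrite /tensorP /tensorQ !mulmx_block !(mul0mx, mulmx0, mul1mx, mulmx1) PP QQ PQ.
by rewrite !(addmxx, addr0, add0r) block_mx0 mulmx0 mul0mx.
Qed.

Definition lendim J z := \rank (lenmx J z).
Definition Prank J z := \rank (lenmx J z *m Pmx J).

Lemma lendim_cons j J z : lendim (j :: J) z = (lendim J (z - 1) + lendim J z)%N.
Proof.
rewrite /lendim (intertwine_rank (consUK J) (consUKV J) (lenmx_cons j J z)).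
exact: rank_diag_block_mx.
Qed.

Lemma Prank_cons j J z :
  Prank (j :: J) z = \rank (tensorL (lenmx J) z *m tensorP (Pmx J) (Qmx J)).
Proof.
apply: (intertwine_rank (consUK J) (consUKV J)).
exact: (intertwine_mul (lenmx_cons j J z) (Pmx_cons j J)).
Qed.

Lemma lendim_cons2 j1 j2 J z :
  lendim [:: j1, j2 & J] z = (lendim J (z - 2) + 2 * lendim J (z - 1) + lendim J z)%N.
Proof.
have -> : z - 2 = z - 1 - 1 by ring.
by rewrite !lendim_cons mul2n -addnn !addnA.
Qed.

Lemma Prank_cons2 j1 j2 J z :
  Prank [:: j1, j2 & J] z = (lendim J (z - 2) + 2 * Prank J (z - 1))%N.
Proof.
have [PP QQ PQ] := Pmx_Qmx_relations J.
rewrite Prank_cons.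
rewrite -(rank_tensor2_LP pchar_F2 PP QQ PQ (Pmx_lenmx J) (Qmx_lenmx J) (lenmx_idem J)).
apply: (intertwine_rank (block_diag_mulmx1 (consUK J)) (block_diag_mulmx1 (consUKV J))).
apply: intertwine_mul; first exact: tensorL_intertwine (lenmx_cons j2 J).
exact: tensorP_intertwine (Pmx_cons j2 J) (Qmx_cons j2 J).
Qed.

Lemma Prank_nil z : Prank [::] z = 0%N.
Proof. by rewrite /Prank Pmx_nil mulmx0 mxrank0. Qed.

Lemma Prank_single j z : Prank [:: j] z = 0%N.
Proof. by rewrite Prank_cons Pmx_nil Qmx_nil /tensorP block_mx0 mulmx0 mxrank0. Qed.

Lemma lendim_nil z : lendim [::] z = (z == 0).
Proof.
rewrite /lendim; have -> : lenmx [::] z = if z == 0 then 1%:M else 0.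
  apply/matrixP => i k; rewrite !mxE /redlen (tuple0 (enum_val i : MJbasis [::])) /=.
  by rewrite eq_sym; case: (z == 0); rewrite !mxE ?mul0rn.
by case: (z == 0); rewrite ?mxrank0 // mxrank1 card_tuple card_bool.
Qed.

Definition margolis_count (n : nat) (z : int) : nat :=
  if ((n./2)%:Z <= z) && (z <= (uphalf n)%:Z) then (2 ^ n./2)%N else 0%N.

Lemma margolis_count_SS n z : margolis_count n.+2 z = (2 * margolis_count n (z - 1))%N.
Proof.
rewrite /margolis_count /= expnS.
have -> : ((n./2).+1%:Z <= z) && (z <= (uphalf n).+1%:Z) =
          ((n./2)%:Z <= z - 1) && (z - 1 <= (uphalf n)%:Z).
  by apply/idP/idP => /andP[lo hi]; apply/andP; split; lia.
by case: ifP; rewrite ?muln0.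
Qed.

Definition rank_balance J :=
  forall z, lendim J z = (margolis_count (size J) z + Prank J z + Prank J (z + 2))%N.

Lemma rank_balance_cons2 j1 j2 J : rank_balance J -> rank_balance [:: j1, j2 & J].
Proof.
move=> bal z; rewrite lendim_cons2 !Prank_cons2 [size _]/= margolis_count_SS.
have -> : z + 2 - 2 = z by ring.
have -> : z + 2 - 1 = z - 1 + 2 by ring.
rewrite (bal (z - 1)); lia.
Qed.

Lemma rank_balance_all J : rank_balance J.
Proof.
suff [] : rank_balance J /\ forall j, rank_balance (j :: J) by [].
elim: J => [|j2 J [balJ balJ1]].
  split=> [z|j z]; rewrite ?lendim_cons !lendim_nil ?Prank_nil ?Prank_single.
    by case: z => [[|l]|k].
  by case: z => [[|[|l]]|k].
by split=> [|j1]; [exact: balJ1 | exact: rank_balance_cons2].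
Qed.

Lemma margolisDimE J (l : nat) :
  margolisDim J l = (lendim J l - Prank J l - Prank J (l%:Z + 2))%N.
Proof.
rewrite /margolisDim lenpartE mxrank_ker_cap.
by rewrite (mxrank_img_cap (lenmx_idem J l) (Pmx_lenmx J l)).
Qed.

Theorem mainTheorem9 (J : seq nat) (t l : nat) :
  uniq J -> all (fun j => 0 < j)%N J ->
  (size J = 2 * t ->
     margolisDim J l = (if l == t then 2 ^ t else 0))%N /\
  (size J = 2 * t + 1 ->
     margolisDim J l = (if (l == t) || (l == t.+1) then 2 ^ t else 0))%N.
Proof.
move=> _ _.
have -> : margolisDim J l = margolis_count (size J) l.
  by rewrite margolisDimE (rank_balance_all J l); lia.
rewrite /margolis_count; split=> ->.
- rewrite mul2n doubleK uphalf_double.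
  by congr (if _ then _ else _); apply/idP/idP; lia.
- rewrite mul2n addn1 /= uphalf_double doubleK.
  by congr (if _ then _ else _); apply/idP/idP; lia.
Qed.
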